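(* For every integer $n\geq 3$ and every $m\in\{3,6,9,\dots,3n-6\}$ there exists a planar graph $G$ with $n$ vertices and $m$ edges such that $c(G)=n+\frac{7}{3}m-2$.
   Context: All graphs are finite, simple and undirected. A clique of a graph $G$ is a (possibly empty) set of pairwise adjacent vertices; $c(G)$ denotes the number of cliques of $G$ (including the empty clique, all single vertices and all edges). *)

From HB Require Import structures.
From mathcomp Require Import all_boot all_order all_algebra.
From mathcomp Require Import all_classical all_reals all_analysis.
From mathcomp Require Import Rstruct Rstruct_topology.
From Stdlib Require Import Rdefinitions.
Set Implicit Arguments. Unset Strict Implicit. Unset Printing Implicit Defensive.
Import Order.TTheory GRing.Theory Num.Theory.
Local Open Scope classical_set_scope.
Local Open Scope ring_scope.

Definition simple_graph (n : nat) (e : rel 'I_n) : Prop :=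
  symmetric e /\ irreflexive e.

Definition num_edges (n : nat) (e : rel 'I_n) : nat :=
  #|[set p : 'I_n * 'I_n | (ltn p.1 p.2) && e p.1 p.2]|.

(* cliques: (possibly empty) sets of pairwise adjacent vertices *)
Definition is_clique (n : nat) (e : rel 'I_n) (A : {set 'I_n}) : bool :=
  [forall u in A, forall v in A, (u != v) ==> e u v].

Definition num_cliques (n : nat) (e : rel 'I_n) : nat :=
  #|[set A : {set 'I_n} | is_clique e A]|.

Definition pt := (R * R)%type.

Definition unit_int (t : R) : Prop := (0 <= t <= 1)%R.

Definition jordan_arc (f : R -> pt) : Prop :=
  {within `[0%R, 1%R]%classic, continuous f} /\
  (forall s t, unit_int s -> unit_int t -> f s = f t -> s = t).

(* A planar drawing: distinct points for vertices, a Jordan arc for each edge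
   {u,v} (u < v) from pos u to pos v whose interior avoids all vertex points,
   and two distinct edge arcs meet only at vertex points (hence only at
   common endpoints). *)
Definition plane_drawing (n : nat) (e : rel 'I_n)
    (pos : 'I_n -> pt) (arc : 'I_n -> 'I_n -> R -> pt) : Prop :=
  injective pos /\
  (forall u v : 'I_n, (ltn u v) -> e u v ->
     [/\ jordan_arc (arc u v), arc u v 0%R = pos u, arc u v 1%R = pos v
       & forall (t : R) (w : 'I_n), (0 < t < 1)%R -> arc u v t <> pos w]) /\
  (forall u v u' v' : 'I_n, (ltn u v) -> e u v -> (ltn u' v') -> e u' v' ->
     (u, v) <> (u', v') ->
     forall s t, unit_int s -> unit_int t -> arc u v s = arc u' v' t ->
     exists w, arc u v s = pos w).

Definition planar (n : nat) (e : rel 'I_n) : Prop :=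
  exists pos arc, @plane_drawing n e pos arc.

(* Let p = m/3 + 2 and take the graph in which the path 2 - 3 - ... - (p-1) is
   joined to the edge {0, 1}, padded with n - p isolated vertices.  It grows from
   the edgeless graph by attaching the isolated vertices 0, 1, ..., p-1 in turn to
   a clique N: this adds |N| edges and 2^|N| - 1 cliques, as the sets x ∪ B with
   B ⊆ N replace the singleton {x}.  From p = 3 on, N is the triangle {0, 1, p-1},
   so every step adds 3 edges and 7 cliques.  For planarity, put 0 and 1 at
   (0, 1) and (0, -1), the path on the x-axis, and draw edges as segments. *)

From Stdlib Require Import Rdefinitions RIneq Lra Psatz.
From mathcomp Require Import all_boot all_order all_algebra zify.
From mathcomp Require classical_sets topology normedtype Rstruct_topology.
Set Implicit Arguments. Unset Strict Implicit. Unset Printing Implicit Defensive.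
Import GRing.Theory.

Definition graph_edges n (e : rel 'I_n) : {set 'I_n * 'I_n} :=
  [set q : 'I_n * 'I_n | (q.1 < q.2) && e q.1 q.2].

Definition graph_cliques n (e : rel 'I_n) : {set {set 'I_n}} :=
  [set A | is_clique e A].

Lemma num_edgesE n (e : rel 'I_n) : num_edges e = #|graph_edges e|.
Proof. by apply: eq_card => q; rewrite inE; apply/idP/idP; rewrite classical_sets.in_setE. Qed.

Lemma num_cliquesE n (e : rel 'I_n) : num_cliques e = #|graph_cliques e|.
Proof. by apply: eq_card => A; rewrite inE; apply/idP/idP; rewrite classical_sets.in_setE. Qed.

Lemma is_cliqueP n (e : rel 'I_n) (A : {set 'I_n}) :
  reflect {in A &, forall u v, u != v -> e u v} (is_clique e A).
Proof.
apply: (iffP forall_inP) => [cl u v uA vA | cl u uA].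
  by move: (cl u uA) => /forall_inP/(_ v vA)/implyP.
by apply/forall_inP => v vA; apply/implyP; apply: cl.
Qed.

Lemma eq_graph_edges n (e e' : rel 'I_n) : e =2 e' -> graph_edges e = graph_edges e'.
Proof. by move=> ee'; apply/setP => q; rewrite !inE ee'. Qed.

Lemma eq_graph_cliques n (e e' : rel 'I_n) : e =2 e' -> graph_cliques e = graph_cliques e'.
Proof.
move=> ee'; apply/setP => A; rewrite !inE.
by apply/is_cliqueP/is_cliqueP => cl u v uA vA uv; [rewrite -ee' | rewrite ee']; apply: cl.
Qed.

Section Edgeless.

Variables (n : nat) (e : rel 'I_n).
Hypothesis e_edgeless : forall u v, e u v = false.

Lemma card_edges_edgeless : #|graph_edges e| = 0.
Proof. by apply: eq_card0 => q; rewrite inE e_edgeless andbF. Qed.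

Lemma card_cliques_edgeless : #|graph_cliques e| = n.+1.
Proof.
suff -> : graph_cliques e = set0 |: [set [set u] | u : 'I_n].
  rewrite cardsU1 card_imset ?card_ord; last exact: set1_inj.
  by case: imsetP => // -[u _ /setP/(_ u)]; rewrite !inE eqxx.
apply/setP => A; rewrite !inE; apply/is_cliqueP/idP => [cl | ].
  have [-> | [u uA]] := set_0Vmem A; first by rewrite eqxx.
  apply/orP; right; apply/imsetP; exists u => //; apply/setP => v; rewrite inE.
  have [-> // | vu] := eqVneq v u; apply/negbTE/negP => vA.
  by move: (cl v u vA uA vu); rewrite e_edgeless.
by case/orP => [/eqP-> u | /imsetP[w _ ->] u v /set1P-> /set1P->]; rewrite ?inE ?eqxx.
Qed.

End Edgeless.

Definition add_vertex n (e : rel 'I_n) (x : 'I_n) (N : {set 'I_n}) : rel 'I_n :=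
  fun u v => [|| e u v, (v == x) && (u \in N) | (u == x) && (v \in N)].

Section AddVertex.

Variables (n : nat) (e : rel 'I_n) (x : 'I_n) (N : {set 'I_n}).
Hypothesis x_isolated : forall u, e u x = false.

Let e' := add_vertex e x N.

Lemma add_vertex_edges : {in N, forall u : 'I_n, u < x} ->
  graph_edges e' = graph_edges e :|: [set (u, x) | u in N].
Proof.
move=> Nlt; apply/setP => -[u v]; rewrite !inE /= /e' /add_vertex.
apply/idP/idP.
- case/andP=> uv /or3P[euv | /andP[/eqP-> uN] | /andP[/eqP ux vN]].
  + by rewrite uv euv.
  + by apply/orP; right; apply/imsetP; exists u.
  + by move: (Nlt v vN) uv; rewrite ux; lia.
- case/orP=> [/andP[-> ->] // | /imsetP[w wN [-> ->]]].
  by rewrite Nlt //= eqxx wN orbT.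
Qed.

Lemma card_add_vertex_edges : {in N, forall u : 'I_n, u < x} ->
  #|graph_edges e'| = #|graph_edges e| + #|N|.
Proof.
move=> Nlt; rewrite add_vertex_edges // cardsU card_imset; last by move=> u v [].
rewrite disjoint_setI0 ?cards0 ?subn0 // disjoint_subset.
apply/subsetP => q; rewrite !inE => /andP[_ exq]; apply/imsetP => -[u _ qux].
by move: exq; rewrite qux x_isolated.
Qed.

Hypothesis x_notin_N : x \notin N.

Lemma clique_with_isolated A : is_clique e A -> x \in A -> A = [set x].
Proof.
move=> /is_cliqueP cl xA; apply/setP => u; rewrite inE.
have [-> // | ux] := eqVneq u x.
by apply/negbTE/negP => uA; move: (cl u x uA xA ux); rewrite x_isolated.
Qed.

Hypothesis N_clique : is_clique e N.

Lemma clique_add_vertex_notin (A : {set 'I_n}) : x \notin A -> is_clique e' A = is_clique e A.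
Proof.
move=> xA; have neqx u : u \in A -> (u == x) = false.
  by move=> uA; apply: contraNF xA => /eqP<-.
apply/is_cliqueP/is_cliqueP => cl u v uA vA uv; move: (cl u v uA vA uv);
  by rewrite /e' /add_vertex !neqx // !andFb !orbF.
Qed.

Lemma clique_add_vertex_in (A : {set 'I_n}) : x \in A -> is_clique e' A = (A :\ x \subset N).
Proof.
move=> xA; apply/is_cliqueP/subsetP => [cl u | AN u v].
  rewrite !inE => /andP[ux uA]; move: (cl u x uA xA ux).
  by rewrite /e' /add_vertex x_isolated eqxx (negbTE ux) orbF.
have inN w : w \in A -> w != x -> w \in N by move=> wA wx; apply: AN; rewrite !inE wx.
move=> uA vA; rewrite /e' /add_vertex.
have [-> xv | ux uv] := eqVneq u x; first by apply/or3P/Or33/inN; rewrite // eq_sym.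
have [-> | vx] := eqVneq v x; first by apply/or3P/Or32/inN.
by move/is_cliqueP: N_clique => ->; rewrite ?inN.
Qed.

Lemma add_vertex_cliques :
  graph_cliques e' = (graph_cliques e :\ [set x]) :|: [set x |: B | B in powerset N].
Proof.
apply/setP => A; rewrite !inE.
have [xA | xA] := boolP (x \in A).
- rewrite clique_add_vertex_in //.
  have -> : (A != [set x]) && is_clique e A = false.
    by apply/negbTE/andP => -[Ax /clique_with_isolated/(_ xA)/eqP]; apply/negP.
  apply/idP/imsetP => [AN | [B BN ->]]; last first.
    rewrite powersetE in BN; apply/subsetP => u; rewrite !inE => /andP[/negbTE-> uB].
    exact: (subsetP BN).
  by exists (A :\ x); rewrite ?powersetE // setD1K.
- rewrite clique_add_vertex_notin //.
  have -> : A != [set x] by apply: contraNneq xA => ->; rewrite set11.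
  suff -> : A \in [set x |: B | B in powerset N] = false by rewrite orbF.
  by apply/imsetP => -[B _ AB]; move: xA; rewrite AB setU11.
Qed.

Lemma card_add_vertex_cliques :
  #|graph_cliques e'| + 1 = #|graph_cliques e| + 2 ^ #|N|.
Proof.
have x_clique : [set x] \in graph_cliques e.
  by rewrite inE; apply/is_cliqueP => u v /set1P-> /set1P->; rewrite eqxx.
have inj : {in powerset N &, injective (fun B => x |: B)}.
  move=> B C; rewrite !inE => BN CN.
  have xB : x \notin B by apply: contra x_notin_N; apply: (subsetP BN).
  have xC : x \notin C by apply: contra x_notin_N; apply: (subsetP CN).
  by move=> eBC; rewrite -(setU1K xB) eBC setU1K.
rewrite add_vertex_cliques cardsU card_in_imset // card_powerset.
rewrite [#|graph_cliques e|](cardsD1 [set x]) x_clique.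
rewrite disjoint_setI0 ?cards0 /=; first by rewrite subn0 addn1 add1n addSn.
rewrite disjoint_subset; apply/subsetP => A; rewrite !inE => /andP[Ax /clique_with_isolated clA].
by apply/imsetP => -[B _ AB]; move: Ax; rewrite clA ?eqxx // AB setU11.
Qed.

End AddVertex.

Definition double_fan_adj (p a b : nat) : bool := [&& a < b, b < p & (a <= 1) || (a.+1 == b)].

Definition double_fan n p : rel 'I_n := fun u v => double_fan_adj p u v || double_fan_adj p v u.
Arguments double_fan : clear implicits.

Definition fan_link n p : {set 'I_n} := [set u : 'I_n | (u < p) && ((u <= 1) || (u.+1 == p))].

Lemma double_fan_simple n p : simple_graph (double_fan n p).
Proof. by split=> [u v | u]; rewrite /double_fan 1?orbC // /double_fan_adj ltnn. Qed.

Lemma double_fanS n p (x : 'I_n) : val x = p ->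
  double_fan n p.+1 =2 add_vertex (double_fan n p) x (fan_link n p).
Proof.
move=> xp u v; rewrite /add_vertex /double_fan /double_fan_adj !inE -!(inj_eq val_inj) xp /=; lia.
Qed.

Lemma fan_link_clique n p : is_clique (double_fan n p) (fan_link n p).
Proof.
apply/is_cliqueP => u v; rewrite !inE -(inj_eq val_inj) /double_fan /double_fan_adj /=; lia.
Qed.

Lemma card_fan_link n p : p < n -> #|fan_link n p| = minn p 3.
Proof.
case: n => // n; case: p => [|[|[|p]]] pn.
- by apply/eqP; rewrite cards_eq0; apply/eqP/setP => u; rewrite !inE.
- suff -> : fan_link n.+1 1 = [set inord 0] by rewrite cards1.
  by apply/setP => u; rewrite !inE -(inj_eq val_inj) /= inordK; lia.
- suff -> : fan_link n.+1 2 = [set inord 0; inord 1].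
    by rewrite cards2 -(inj_eq val_inj) /= !inordK; lia.
  by apply/setP => u; rewrite !inE -!(inj_eq val_inj) /= !inordK; lia.
- suff -> : fan_link n.+1 p.+3 = inord p.+2 |: [set inord 0; inord 1].
    by rewrite cardsU1 cards2 !inE -!(inj_eq val_inj) /= !inordK; lia.
  by apply/setP => u; rewrite !inE -!(inj_eq val_inj) /= !inordK; lia.
Qed.

Lemma double_fan_counts n p : p <= n ->
  #|graph_cliques (double_fan n p)| = (if p < 3 then n + 1 + (p == 2) else n + 7 * p - 16) /\
  #|graph_edges (double_fan n p)| = (if p < 3 then nat_of_bool (p == 2) else 3 * p - 6).
Proof.
elim: p => [_ | p IH pn].
  have edgeless u v : double_fan n 0 u v = false by rewrite /double_fan /double_fan_adj; lia.
  by rewrite (card_edges_edgeless edgeless) (card_cliques_edgeless edgeless) addn0 addn1.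
pose x := Ordinal pn.
have [x_isolated xN] : (forall u, double_fan n p u x = false) /\ x \notin fan_link n p.
  by split=> [u|]; rewrite ?inE /double_fan /double_fan_adj /=; lia.
have Nlt : {in fan_link n p, forall u : 'I_n, u < x}.
  by move=> u; rewrite inE /=; lia.
have := card_add_vertex_cliques x_isolated xN (fan_link_clique n p).
have := card_add_vertex_edges x_isolated Nlt.
rewrite -(eq_graph_cliques (double_fanS (erefl : val x = p))).
rewrite -(eq_graph_edges (double_fanS (erefl : val x = p))).
have [IHc IHe] := IH (ltnW pn); rewrite IHc IHe card_fan_link //.
by case: p {IH IHc IHe pn x x_isolated xN Nlt} => [|[|[|p]]]; rewrite /minn /= ?expnS ?expn0; lia.
Qed.

Section Drawing.
Import classical_sets topology normedtype Rstruct_topology.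
Import numFieldNormedType.Exports.
Local Open Scope ring_scope.

Lemma affine_continuous (K : numFieldType) (a b : K) : continuous (fun t : K => a + t * b).
Proof.
move=> t; apply: (@cvgD _ K^o _ (nbhs t) _ (fun=> a) (fun s => s * b)).
  exact: cvg_cst.
by apply: (@cvgM _ _ _ _ id (fun=> b)); [exact: cvg_id | exact: cvg_cst].
Qed.

Local Open Scope R_scope.

Definition segment (a b : pt) (t : R) : pt :=
  (a.1 + t * (b.1 - a.1), a.2 + t * (b.2 - a.2)).

Lemma segment_continuous a b : continuous (segment a b).
Proof.
move=> t; exact: cvg_pair (@affine_continuous R _ _ t) (@affine_continuous R _ _ t).
Qed.

Lemma segment0 a b : segment a b 0 = a.
Proof. by case: a => x y; rewrite /segment /=; f_equal; ring. Qed.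

Lemma segment1 a b : segment a b 1 = b.
Proof. by case: a b => x y [x' y']; rewrite /segment /=; f_equal; ring. Qed.

Lemma segment_inj a b : a <> b -> injective (segment a b).
Proof.
case: a b => x y [x' y'] ab s t [e1 e2].
have [xx' | ?] := Req_dec x x'; have [yy' | ?] := Req_dec y y'; try nra.
by subst; case: ab.
Qed.

Lemma segment_jordan_arc a b : a <> b -> jordan_arc (segment a b).
Proof.
move=> ab; split; first exact: continuous_subspaceT (@segment_continuous a b).
by move=> s t _ _; apply: segment_inj.
Qed.

Lemma INR_ge2 (w : nat) : (2 <= w)%N -> 2 <= INR w.
Proof. by move=> w2; apply: (le_INR 2); apply/leP. Qed.

Lemma INR_add_unit_eq (a b : nat) (s : R) : 0 <= s <= 1 -> INR a + s = INR b -> s = 0 \/ s = 1.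
Proof.
move=> s01 e; have [ba | ab] : (b <= a)%coq_nat \/ (a.+1 <= b)%coq_nat by lia.
- by have := le_INR _ _ ba; lra.
- by have := le_INR _ _ ab; rewrite S_INR; lra.
Qed.

Lemma INR_add_unit_eq2 (a b : nat) (s t : R) : a <> b -> 0 <= s <= 1 -> 0 <= t <= 1 ->
  INR a + s = INR b + t -> s = 0 \/ s = 1.
Proof.
move=> ab s01 t01 e; have [ba | ab'] : (b.+1 <= a)%coq_nat \/ (a.+1 <= b)%coq_nat by lia.
- by have := le_INR _ _ ba; rewrite S_INR; lra.
- by have := le_INR _ _ ab'; rewrite S_INR; lra.
Qed.

Definition fan_pos (p i : nat) : pt :=
  if (i == 0)%N then (0, 1) else if (i == 1)%N then (0, -1)
  else if (i < p)%N then (INR i, 0) else (INR i, 2).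

Lemma fan_pos_mid (p w : nat) : (2 <= w)%N -> (w < p)%N -> fan_pos p w = (INR w, 0).
Proof. by rewrite /fan_pos; case: w => [|[|w]] //= _ ->. Qed.

Lemma fan_posE (p w : nat) :
  [\/ w = 0%N /\ fan_pos p w = (0, 1), w = 1%N /\ fan_pos p w = (0, -1),
     [/\ (2 <= w)%N, (w < p)%N & fan_pos p w = (INR w, 0)]
   | (2 <= w)%N /\ fan_pos p w = (INR w, 2)].
Proof.
rewrite /fan_pos; case: w => [|[|w]] /=; [exact: Or41 | exact: Or42 |].
by case: ifP => wp; [apply: Or43 | apply: Or44].
Qed.

Lemma fan_pos_inj p : injective (fan_pos p).
Proof.
move=> a b E; apply: INR_eq; move: (congr1 fst E) (congr1 snd E).
case: (fan_posE p a) => [[-> ->]|[-> ->]|[a2 _ ->]|[a2 ->]];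
case: (fan_posE p b) => [[-> ->]|[-> ->]|[b2 _ ->]|[b2 ->]] /= e1 e2 //;
  try have := INR_ge2 a2; try have := INR_ge2 b2; lra.
Qed.

Definition fan_arc (p a b : nat) : R -> pt := segment (fan_pos p a) (fan_pos p b).

Lemma fan_arcE (p a b : nat) : double_fan_adj p a b ->
  [\/ [/\ a = 0%N, b = 1%N & forall t, fan_arc p a b t = (0, 1 - 2 * t)],
     [/\ a = 0%N, (2 <= b < p)%N & forall t, fan_arc p a b t = (t * INR b, 1 - t)],
     [/\ a = 1%N, (2 <= b < p)%N & forall t, fan_arc p a b t = (t * INR b, -1 + t)]
   | [/\ (2 <= a)%N, b = a.+1 /\ (b < p)%N & forall t, fan_arc p a b t = (INR a + t, 0)]].
Proof.
rewrite /double_fan_adj /fan_arc /segment => adj.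
have : ((a = 0 /\ b = 1) \/ (a = 0 /\ 2 <= b < p) \/ (a = 1 /\ 2 <= b < p)
          \/ (2 <= a /\ b = a.+1 /\ b < p))%N by lia.
case=> [[-> ->] | [[-> bp] | [[-> bp] | [a2 [-> bp]]]]].
- by apply: Or41; split=> // t; rewrite /fan_pos /=; f_equal; ring.
- apply: Or42; split=> // t; case/andP: bp => b2 bp.
  by rewrite (fan_pos_mid b2 bp) /fan_pos /=; f_equal; ring.
- apply: Or43; split=> // t; case/andP: bp => b2 bp.
  by rewrite (fan_pos_mid b2 bp) /fan_pos /=; f_equal; ring.
- apply: Or44; split=> // t; rewrite (fan_pos_mid _ bp) ?(fan_pos_mid a2) ?S_INR /=; try lia.
  by f_equal; ring.
Qed.

Lemma fan_arc_avoids_vertices (p a b w : nat) t : double_fan_adj p a b -> 0 < t < 1 ->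
  fan_arc p a b t <> fan_pos p w.
Proof.
move=> adj t01.
case: (fan_arcE adj) => [[_ _ ->] | [_ _ ->] | [_ _ ->] | [_ _ ->]];
case: (fan_posE p w) => [[_ ->] | [_ ->] | [w2 _ ->] | [w2 ->]] E;
  move: (congr1 fst E) (congr1 snd E) => /= e1 e2;
  try have := INR_ge2 w2; try lra.
by case: (INR_add_unit_eq (ltac:(lra) : 0 <= t <= 1) e1); lra.
Qed.

Lemma fan_arcs_meet_at_ends (p a b a' b' : nat) s t :
  double_fan_adj p a b -> double_fan_adj p a' b' -> (a, b) <> (a', b') ->
  0 <= s <= 1 -> 0 <= t <= 1 -> fan_arc p a b s = fan_arc p a' b' t -> s = 0 \/ s = 1.
Proof.
(* Compare coordinates: nra settles every pair of edges except equal edges, two edges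
   from the same apex, and two edges meeting on the x-axis. *)
move=> /fan_arcE F /fan_arcE F' + s01 t01; move: F F'.
case=> [[-> -> ->] | [-> /andP[b2 _] ->] | [-> /andP[b2 _] ->] | [a2 [-> _] ->]];
case=> [[-> -> ->] | [-> /andP[c2 _] ->] | [-> /andP[c2 _] ->] | [d2 [-> _] ->]] neq E;
  move: (congr1 fst E) (congr1 snd E) => /= e1 e2;
  try have := INR_ge2 b2; try have := INR_ge2 c2; try have := INR_ge2 a2;
  try have := INR_ge2 d2;
  first [left; nra | right; nra | exfalso; nra | idtac]; move=> *.
- by case: neq.
- left; have st : s = t by lra.
  subst t; case: (Req_dec s 0) => // s0; exfalso; apply: neq; f_equal.
  exact: INR_eq (Rmult_eq_reg_l s _ _ e1 s0).
- left; have st : s = t by lra.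
  subst t; case: (Req_dec s 0) => // s0; exfalso; apply: neq; f_equal.
  exact: INR_eq (Rmult_eq_reg_l s _ _ e1 s0).
- have t1 : t = 1 by lra.
  by subst t; rewrite Rmult_1_l in e1; apply: INR_add_unit_eq s01 e1.
- have t1 : t = 1 by lra.
  by subst t; rewrite Rmult_1_l in e1; apply: INR_add_unit_eq s01 e1.
- by apply: (INR_add_unit_eq2 _ s01 t01 e1) => aa; apply: neq; rewrite aa.
Qed.

Lemma double_fan_planar n p : planar (double_fan n p).
Proof.
exists (fun u : 'I_n => fan_pos p u), (fun u v : 'I_n => fan_arc p u v).
have edge (u v : 'I_n) : (u < v)%N -> double_fan n p u v -> double_fan_adj p u v.
  by rewrite /double_fan => uv /orP[// | ]; rewrite /double_fan_adj; lia.
split; [| split].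
- by move=> u v /fan_pos_inj/val_inj.
- move=> u v uv /(edge _ _ uv) adj; split.
  + by apply: segment_jordan_arc => /fan_pos_inj uvE; move: uv; rewrite /ltn /= uvE; lia.
  + exact: segment0.
  + exact: segment1.
  + by move=> t w t01; apply: fan_arc_avoids_vertices.
- move=> u v u' v' uv /(edge _ _ uv) adj uv' /(edge _ _ uv') adj' neq s t s01 t01 E.
  have neq' : (val u, val v) <> (val u', val v').
    by case=> /val_inj eu /val_inj ev; apply: neq; rewrite eu ev.
  case: (fan_arcs_meet_at_ends adj adj' neq' s01 t01 E) => ->.
  + by exists u; rewrite /fan_arc segment0.
  + by exists v; rewrite /fan_arc segment1.
Qed.

End Drawing.

Local Open Scope ring_scope.

Theorem proposition7 (n m : nat) :
  (3 <= n)%N -> (3 %| m)%N -> (3 <= m)%N -> (m <= 3 * n - 6)%N ->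
  exists e : rel 'I_n,
    [/\ simple_graph e, planar e, num_edges e = m &
        (num_cliques e)%:R = n%:R + (7%:R / 3%:R) * m%:R - 2%:R :> rat].
Proof.
move=> n_ge3 /dvdnP[k ->] m_ge3 m_le.
have p_le_n : (k + 2 <= n)%N by lia.
have p_ge3 : (k + 2 < 3)%N = false by lia.
have [cliques edges] := double_fan_counts p_le_n; rewrite p_ge3 in cliques edges.
exists (double_fan n (k + 2)); split.
- exact: double_fan_simple.
- exact: double_fan_planar.
- by rewrite num_edgesE edges; lia.
- rewrite num_cliquesE cliques (_ : n + 7 * (k + 2) - 16 = n + 7 * k - 2)%N; last lia.
  rewrite natrB; last lia.
  by rewrite natrD [(k * 3)%N]mulnC !natrM mulrA divfK.
Qed.
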